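(* Let $f\colon X\to Y$ be a function of metric spaces, $m\ge0$, and let $D^{(m+1)}_f\colon\mathbb R_+\times\mathbb R_+\to\mathbb R_+$ be an $m$-dimensional control function of $f$. Define inductively, for $k>m+1$, $D^{(k)}_f(r_X,R_Y)=D^{(k-1)}_f(3r_X,R_Y)+2r_X$. Then each $D^{(k)}_f$ ($k\ge m+1$) is an $(m,k)$-dimensional control function of $f$.
   Context: For $r>0$, the $r$-components of $C\subset X$ are the equivalence classes of points of $C$ joined by finite sequences in $C$ with consecutive distances $\le r$. An $m$-dimensional control function of $f$ is $D_f\colon\mathbb R_+\times\mathbb R_+\to\mathbb R_+$ such that for all $r_X,R_Y>0$ every $A\subset X$ with $\operatorname{diam} f(A)\le R_Y$ is the union of $m+1$ sets whose $r_X$-components have diameter $\le D_f(r_X,R_Y)$. For $k\ge m+1\ge1$, an $(m,k)$-dimensional control function of $f$ is $D_f\colon\mathbb R_+\times\mathbb R_+\to\mathbb R_+$ such that for all $r_X,R_Y>0$ every $A\subset X$ with $\operatorname{diam} f(A)\le R_Y$ can be written as $A_1\cup\dots\cup A_k$ where the $r_X$-components of each $A_i$ have diameter $\le D_f(r_X,R_Y)$ and every $x\in A$ belongs to at least $k-m$ of the sets $A_i$. *)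

From Stdlib Require Import Reals List Relations.
Open Scope R_scope.

Definition is_metric {X : Type} (d : X -> X -> R) : Prop :=
  (forall x y, 0 <= d x y) /\
  (forall x y, d x y = 0 <-> x = y) /\
  (forall x y, d x y = d y x) /\
  (forall x y z, d x z <= d x y + d y z).

Definition diam_le {X : Type} (d : X -> X -> R) (S : X -> Prop) (D : R) : Prop :=
  forall x y, S x -> S y -> d x y <= D.

Definition r_step {X : Type} (d : X -> X -> R) (C : X -> Prop) (r : R) : relation X :=
  fun a b => C a /\ C b /\ d a b <= r.

Definition same_r_component {X : Type} (d : X -> X -> R) (C : X -> Prop) (r : R)
    (x y : X) : Prop :=
  C x /\ C y /\ clos_refl_trans X (r_step d C r) x y.

Definition r_components_diam_le {X : Type} (d : X -> X -> R) (C : X -> Prop)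
    (r D : R) : Prop :=
  forall x y, same_r_component d C r x y -> d x y <= D.

Definition dim_control {X Y : Type} (dX : X -> X -> R) (dY : Y -> Y -> R)
    (f : X -> Y) (m : nat) (D : R -> R -> R) : Prop :=
  (forall rX RY, 0 < rX -> 0 < RY -> 0 <= D rX RY) /\
  forall rX RY, 0 < rX -> 0 < RY ->
  forall A : X -> Prop, diam_le dY (fun y => exists x, A x /\ f x = y) RY ->
  exists B : nat -> X -> Prop,
    (forall x, A x <-> exists i, (i < S m)%nat /\ B i x) /\
    (forall i, (i < S m)%nat -> r_components_diam_le dX (B i) rX (D rX RY)).

Definition dim_mk_control {X Y : Type} (dX : X -> X -> R) (dY : Y -> Y -> R)
    (f : X -> Y) (m k : nat) (D : R -> R -> R) : Prop :=
  (forall rX RY, 0 < rX -> 0 < RY -> 0 <= D rX RY) /\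
  forall rX RY, 0 < rX -> 0 < RY ->
  forall A : X -> Prop, diam_le dY (fun y => exists x, A x /\ f x = y) RY ->
  exists B : nat -> X -> Prop,
    (forall x, A x <-> exists i, (i < k)%nat /\ B i x) /\
    (forall i, (i < k)%nat -> r_components_diam_le dX (B i) rX (D rX RY)) /\
    (forall x, A x -> exists l : list nat,
        NoDup l /\ (k - m <= length l)%nat /\
        forall i, In i l -> (i < k)%nat /\ B i x).

(* D_iter D0 j = D^{(m+1+j)} given D^{(m+1)} = D0:
   D^{(k)}(r,R) = D^{(k-1)}(3r,R) + 2r *)
Fixpoint D_iter (D0 : R -> R -> R) (j : nat) : R -> R -> R :=
  match j with
  | O => D0
  | S j' => fun rX RY => D_iter D0 j' (3 * rX) RY + 2 * rX
  end.

(* Given a cover B_0, ..., B_(k-1) adapted to scale 3r in which every point lies in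
   at least k - m sets, put C_j := the r-neighbourhood of B_j inside A, and let
   E be the set of points of A that lie in B_j whenever they lie in C_j.  An
   r-chain in C_j shadows a 3r-chain in B_j, so its r-components grow by at most
   2r; an r-chain in E starting in B_j never leaves B_j.  A point outside E
   lies in some C_j \ B_j, so every point gains one extra membership and
   C_0, ..., C_(k-1), E is a cover for k + 1 sets at scale r. *)

From Pilot Require Import Defs.
From Stdlib Require Import Reals List Relations.
From Stdlib Require Import Lra Lia Classical.
Open Scope R_scope.

Lemma clos_refl_trans_simulation {X : Type} (R1 R2 : relation X) (Q : X -> X -> Prop) :
  (forall x y a, R1 x y -> Q x a -> exists b, Q y b /\ R2 a b) ->
  forall x y, clos_refl_trans X R1 x y -> forall a, Q x a ->
  exists b, Q y b /\ clos_refl_trans X R2 a b.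
Proof.
  intros Hsim x y Hxy; induction Hxy as [x y Hxy | x | x y z _ IHxy _ IHyz];
    intros a Ha.
  - destruct (Hsim x y a Hxy Ha) as [b [Hb Hab]].
    exists b; split; [exact Hb | now apply rt_step].
  - exists a; split; [exact Ha | apply rt_refl].
  - destruct (IHxy a Ha) as [b [Hb Hab]].
    destruct (IHyz b Hb) as [c [Hc Hbc]].
    exists c; split; [exact Hc | eapply rt_trans; eauto].
Qed.

Section Components.

Context {X : Type} (d : X -> X -> R).
Hypothesis d_sym : forall x y, d x y = d y x.
Hypothesis d_triangle : forall x y z, d x z <= d x y + d y z.

Lemma r_components_diam_le_near (B C : X -> Prop) (r D : R) :
  r_components_diam_le d B (3 * r) D ->
  (forall x, C x -> exists a, B a /\ d x a <= r) ->
  r_components_diam_le d C r (D + 2 * r).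
Proof.
  intros HB Hnear x y [Cx [Cy Hxy]].
  destruct (Hnear x Cx) as [a [Ba Hxa]].
  assert (Hshadow : forall x0 y0 a0, Defs.r_step d C r x0 y0 ->
            B a0 /\ d x0 a0 <= r ->
            exists b, (B b /\ d y0 b <= r) /\ Defs.r_step d B (3 * r) a0 b).
  { intros x0 y0 a0 [_ [Cy0 Hxy0]] [Ba0 Hxa0].
    destruct (Hnear y0 Cy0) as [b [Bb Hyb]].
    exists b; split; [now split | repeat split; auto].
    pose proof (d_triangle a0 x0 y0); pose proof (d_triangle a0 y0 b).
    rewrite (d_sym a0 x0) in *; lra. }
  destruct (clos_refl_trans_simulation _ _ _ Hshadow x y Hxy a (conj Ba Hxa))
    as [b [[Bb Hyb] Hab]].
  assert (Hab_le : d a b <= D) by (apply HB; repeat split; auto).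
  pose proof (d_triangle x a y); pose proof (d_triangle a b y).
  rewrite (d_sym b y) in *; lra.
Qed.

Lemma r_component_stays_in (B C : X -> Prop) (r r' D : R) :
  r <= r' -> r_components_diam_le d B r' D ->
  (forall a b, C a -> C b -> B a -> d a b <= r -> B b) ->
  forall x y, B x -> same_r_component d C r x y -> d x y <= D.
Proof.
  intros Hrr' HB Hclosed x y Bx [Cx [Cy Hxy]].
  assert (Hstay : forall x0 y0 a0, Defs.r_step d C r x0 y0 -> a0 = x0 /\ B x0 ->
            exists b, (b = y0 /\ B y0) /\ Defs.r_step d B r' a0 b).
  { intros x0 y0 a0 [Cx0 [Cy0 Hxy0]] [-> Bx0].
    assert (By0 : B y0) by now apply (Hclosed x0).
    exists y0; repeat split; auto; lra. }
  destruct (clos_refl_trans_simulation _ _ _ Hstay x y Hxy x (conj eq_refl Bx))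
    as [b [[-> By] Hchain]].
  apply HB; repeat split; auto.
Qed.

End Components.

Section ExtendCover.

Context {X : Type} (d : X -> X -> R).
Hypothesis d_refl : forall x, d x x = 0.
Hypothesis d_sym : forall x y, d x y = d y x.
Hypothesis d_triangle : forall x y z, d x z <= d x y + d y z.

Definition thicken (A B : X -> Prop) (r : R) (x : X) : Prop :=
  A x /\ exists a, B a /\ d x a <= r.

Variables (A : X -> Prop) (B : nat -> X -> Prop) (k : nat) (r : R).
Hypothesis B_cover : forall x, A x <-> exists i, (i < k)%nat /\ B i x.

Definition cover_core (x : X) : Prop :=
  A x /\ forall j, (j < k)%nat -> thicken A (B j) r x -> B j x.

Definition extend_cover (i : nat) (x : X) : Prop :=
  ((i < k)%nat /\ thicken A (B i) r x) \/ (i = k /\ cover_core x).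

Lemma thicken_of_mem (r_ge0 : 0 <= r) j x :
  (j < k)%nat -> B j x -> thicken A (B j) r x.
Proof.
  intros Hj Bx; split.
  - apply B_cover; eauto.
  - exists x; split; [exact Bx | rewrite d_refl; exact r_ge0].
Qed.

Lemma extend_cover_cover (r_ge0 : 0 <= r) x :
  A x <-> exists i, (i < S k)%nat /\ extend_cover i x.
Proof.
  split.
  - intros Ax; destruct (proj1 (B_cover x) Ax) as [i [Hi Bx]].
    exists i; split; [lia | left; split; [exact Hi | now apply thicken_of_mem]].
  - now intros [i [_ [[_ [Ax _]] | [_ [Ax _]]]]].
Qed.

Lemma extend_cover_diam (D : R) (r_ge0 : 0 <= r) :
  (forall i, (i < k)%nat -> r_components_diam_le d (B i) (3 * r) D) ->
  forall i, (i < S k)%nat -> r_components_diam_le d (extend_cover i) r (D + 2 * r).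
Proof.
  intros HB i Hi x y Hxy.
  destruct (proj1 Hxy) as [[Hik _] | [-> [Ax _]]].
  - refine (r_components_diam_le_near d d_sym d_triangle (B i) _ r D
              (HB i Hik) _ x y Hxy).
    intros z [[_ [_ Hnear]] | [Hz _]]; [exact Hnear | lia].
  - destruct (proj1 (B_cover x) Ax) as [i0 [Hi0 Bx]].
    enough (d x y <= D) by lra.
    apply (r_component_stays_in d (B i0) (extend_cover k) r (3 * r)); auto; [lra |].
    intros a b [[Hka _] | _] [[Hkb _] | [_ Cb]] Ba Hab; try lia.
    apply (proj2 Cb i0 Hi0); split; [exact (proj1 Cb) |].
    exists a; split; [exact Ba | now rewrite d_sym].
Qed.

Lemma extend_cover_multiplicity (m : nat) (r_ge0 : 0 <= r) x :
  A x -> (exists l, NoDup l /\ (k - m <= length l)%nat /\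
     forall i, In i l -> (i < k)%nat /\ B i x) ->
  exists l, NoDup l /\ (S k - m <= length l)%nat /\
    forall i, In i l -> (i < S k)%nat /\ extend_cover i x.
Proof.
  intros Ax [l [Hnodup [Hlen Hl]]].
  assert (Hold : forall i, In i l -> (i < S k)%nat /\ extend_cover i x).
  { intros i Hin; destruct (Hl i Hin) as [Hi Bx].
    split; [lia | left; split; [exact Hi | now apply thicken_of_mem]]. }
  assert (Hnew : exists j, ~ In j l /\ (j < S k)%nat /\ extend_cover j x).
  { destruct (classic (exists j, (j < k)%nat /\ thicken A (B j) r x /\ ~ B j x))
      as [[j [Hj [Hthick HnB]]] | Hnone].
    - exists j; split; [intros Hin; exact (HnB (proj2 (Hl j Hin))) |].
      split; [lia | left; now split].
    - exists k; split; [intros Hin; destruct (Hl k Hin); lia |].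
      split; [lia | right; split; [reflexivity | split; [exact Ax |]]].
      intros j Hj Hthick; apply NNPP; intros HnB; apply Hnone; eauto.
  }
  destruct Hnew as [j [Hnotin Hj]].
  exists (j :: l); split; [now constructor | split; [cbn [length]; lia |]].
  intros i [<- | Hin]; [exact Hj | now apply Hold].
Qed.

End ExtendCover.

Lemma dim_mk_control_succ {X Y : Type} (dX : X -> X -> R) (dY : Y -> Y -> R)
    (f : X -> Y) (m k : nat) (D : R -> R -> R) :
  is_metric dX -> dim_mk_control dX dY f m k D ->
  dim_mk_control dX dY f m (S k) (fun rX RY => D (3 * rX) RY + 2 * rX).
Proof.
  intros [_ [d_zero [d_sym d_triangle]]] [D_ge0 HD].
  assert (d_refl : forall x, dX x x = 0) by (intros x; now apply d_zero).
  split.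
  - intros rX RY HrX HRY; specialize (D_ge0 (3 * rX) RY ltac:(lra) HRY); lra.
  - intros rX RY HrX HRY A HA.
    destruct (HD (3 * rX) RY ltac:(lra) HRY A HA) as [B [Hcover [Hdiam Hmult]]].
    assert (r_ge0 : 0 <= rX) by lra.
    exists (extend_cover dX A B k rX); split; [| split].
    + intros x; now apply extend_cover_cover.
    + now apply extend_cover_diam.
    + intros x Ax; apply extend_cover_multiplicity; auto.
Qed.

Lemma dim_mk_control_of_dim_control {X Y : Type} (dX : X -> X -> R)
    (dY : Y -> Y -> R) (f : X -> Y) (m : nat) (D : R -> R -> R) :
  dim_control dX dY f m D -> dim_mk_control dX dY f m (S m) D.
Proof.
  intros [D_ge0 HD]; split; [exact D_ge0 |].
  intros rX RY HrX HRY A HA.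
  destruct (HD rX RY HrX HRY A HA) as [B [Hcover Hdiam]].
  exists B; split; [exact Hcover | split; [exact Hdiam |]].
  intros x Ax; destruct (proj1 (Hcover x) Ax) as [i [Hi Bx]].
  exists (i :: nil); split; [repeat constructor; easy |].
  split; [cbn [length]; lia |].
  intros i' [<- | []]; now split.
Qed.

Theorem mainTheorem13 (X Y : Type) (dX : X -> X -> R) (dY : Y -> Y -> R)
    (HX : is_metric dX) (HY : is_metric dY) (f : X -> Y) (m : nat)
    (D0 : R -> R -> R) (HD : dim_control dX dY f m D0) :
  forall k : nat, (S m <= k)%nat ->
    dim_mk_control dX dY f m k (D_iter D0 (k - S m)).
Proof.
  assert (Hiter : forall j, dim_mk_control dX dY f m (S m + j) (D_iter D0 j)).
  { induction j as [| j IHj].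
    - rewrite Nat.add_0_r; now apply dim_mk_control_of_dim_control.
    - rewrite Nat.add_succ_r; now apply dim_mk_control_succ. }
  intros k Hk.
  replace k with (S m + (k - S m))%nat at 1 by lia.
  apply Hiter.
Qed.
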